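(* Let $R$ be a commutative ring with identity that is not an integral domain. Then $\gamma_t(\Gamma(R)) = 1$ if and only if $Z(R)$ is an annihilator ideal, i.e., $Z(R) = \operatorname{ann}(a)$ for some $a \in R$.
   Context: All rings are commutative with identity. $Z(R)$ is the set of zero-divisors, $Z(R)^*=Z(R)\setminus\{0\}$, and $\operatorname{ann}(a)=\{x\in R: ax=0\}$. The zero-divisor graph $\Gamma(R)$ has vertex set $Z(R)^*$; distinct $r,s$ are adjacent iff $rs=0$, and $x$ is adjacent to itself iff $x^2=0$. A total dominating set is a set $X\subseteq Z(R)^*$ such that every vertex $v$ is adjacent to some $x\in X$ (self-adjacency counts); $\gamma_t(\Gamma(R))$ is the minimum cardinality of a total dominating set. *)

From mathcomp Require Import all_boot all_algebra.
Set Implicit Arguments. Unset Strict Implicit. Unset Printing Implicit Defensive.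
Import GRing.Theory.
Local Open Scope ring_scope.

(* R : comNzRingType = commutative ring with identity, 1 <> 0. *)

Definition zero_divisor (R : comNzRingType) (x : R) : Prop :=
  exists y : R, y != 0 /\ x * y = 0.

Definition zd_vertex (R : comNzRingType) (x : R) : Prop :=
  x != 0 /\ zero_divisor x.

Definition ann (R : comNzRingType) (a : R) : R -> Prop := fun x => a * x = 0.

Definition zdg_adj (R : comNzRingType) (r s : R) : Prop :=
  (r != s /\ r * s = 0) \/ (r = s /\ r * r = 0).

(* R is an integral domain (R nontrivial is built into comNzRingType). *)
Definition is_integral_domain (R : comNzRingType) : Prop :=
  forall a b : R, a * b = 0 -> a = 0 \/ b = 0.

Definition total_dominating (R : comNzRingType) (X : R -> Prop) : Prop :=
  (forall x, X x -> zd_vertex x) /\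
  (forall v, zd_vertex v -> exists x, X x /\ zdg_adj v x).

(* gamma_t(Gamma(R)) = n (for a natural number n): there is a total
   dominating set with exactly n elements, and every total dominating set
   has at least n elements (finite ones: at least n listed distinct
   elements; infinite ones trivially have cardinality >= n). *)
Definition total_domination_number_is (R : comNzRingType) (n : nat) : Prop :=
  (exists s : seq R, uniq s /\ size s = n /\
      total_dominating (fun x => x \in s)) /\
  (forall X : R -> Prop, total_dominating X ->
     forall m : nat, (m < n)%N ->
       ~ (exists s : seq R, uniq s /\ size s = m /\ forall x, X x <-> x \in s)).

From mathcomp Require Import all_boot all_algebra.
From Stdlib Require Import Classical.
Local Open Scope ring_scope.
Import GRing.Theory.

Set Implicit Arguments.
Unset Strict Implicit.
Unset Printing Implicit Defensive.

(* If gamma_t = 1 with dominating vertex a, every vertex is adjacent to a,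
   so Z(R) = ann(a). Conversely, if Z(R) = ann(a) then a is a nonzero
   zero-divisor (ann(a) contains the zero-divisors of a non-domain but not 1),
   a is adjacent to every vertex, and a total dominating set is never empty
   because Gamma(R) has a vertex. *)

Section ZeroDivisorGraph.

Variable R : comNzRingType.

Lemma not_integral_domain_vertex : ~ is_integral_domain R -> exists v : R, zd_vertex v.
Proof.
move=> nD; apply: NNPP => noV; apply: nD => a b ab.
case: (eqVneq a 0) => [->|a0]; first by left.
case: (eqVneq b 0) => [->|b0]; first by right.
by case: noV; exists a; split=> //; exists b.
Qed.

Lemma zdg_adj_mul0 (r s : R) : zdg_adj r s -> r * s = 0.
Proof. by case=> [[_ rs] | [-> ss]]. Qed.

Lemma not_zero_divisor1 : ~ zero_divisor (1 : R).
Proof. by case=> y [/negP y0]; rewrite mul1r => /eqP. Qed.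

Lemma total_dominating_nonempty (X : R -> Prop) :
  (exists v : R, zd_vertex v) -> total_dominating X -> exists x, X x.
Proof. by move=> [v Vv] [_ /(_ v Vv) [x [Xx _]]]; exists x. Qed.

Lemma total_dominating1_ann (a : R) :
  total_dominating (fun x => x \in [:: a]) ->
  forall x : R, zero_divisor x <-> ann a x.
Proof.
move=> [Xv Xd] x; split=> [zx | ax].
- case: (eqVneq x 0) => [->|x0]; first by rewrite /ann mulr0.
  have [y [/[!inE] /eqP -> /zdg_adj_mul0 xa]] := Xd x (conj x0 zx).
  by rewrite /ann mulrC.
- have [a0 _] := Xv a (mem_head _ _).
  by exists a; rewrite mulrC.
Qed.

Lemma ann_zero_divisors_vertex (a : R) :
  (exists v : R, zd_vertex v) ->
  (forall x : R, zero_divisor x <-> ann a x) -> zd_vertex a.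
Proof.
move=> [v [v0 zv]] Za; split.
- apply/negP => /eqP a0; apply: not_zero_divisor1.
  by apply/Za; rewrite /ann a0 mul0r.
- by exists v; split=> //; apply/Za.
Qed.

Lemma ann_zero_divisors_total_dominating (a : R) :
  zd_vertex a -> (forall x : R, zero_divisor x <-> ann a x) ->
  total_dominating (fun x => x \in [:: a]).
Proof.
move=> Va Za; split=> [x /[!inE] /eqP -> // | v [_ zv]].
exists a; split; first by rewrite inE.
have va : v * a = 0 by rewrite mulrC; apply/Za.
by case: (eqVneq v a) va => [->|neq] va; [right | left].
Qed.

Lemma total_domination_number1 (a : R) :
  (exists v : R, zd_vertex v) -> total_dominating (fun x => x \in [:: a]) ->
  total_domination_number_is R 1.
Proof.
move=> V Xa; split; first by exists [:: a].
move=> X TX m; rewrite ltnS leqn0 => /eqP -> [s [_ [/size0nil -> Xs]]].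
by have [x /Xs] := total_dominating_nonempty V TX.
Qed.

End ZeroDivisorGraph.

Theorem theorem3p2 (R : comNzRingType) :
  ~ is_integral_domain R ->
  (total_domination_number_is R 1 <->
   exists a : R, forall x : R, zero_divisor x <-> ann a x).
Proof.
move=> /not_integral_domain_vertex V; split.
- move=> [[[|a [|? ?]] [_ [//= _ Ta]]] _].
  by exists a; apply: total_dominating1_ann.
- move=> [a Za].
  apply: (total_domination_number1 V).
  exact: ann_zero_divisors_total_dominating (ann_zero_divisors_vertex V Za) Za.
Qed.
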